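(* Let $\mathbb{X},\mathbb{Y}$ be real normed spaces, $\epsilon\in[0,1)$, and $T\in\mathbb{B}(\mathbb{X},\mathbb{Y})$ nonzero. Then for any $A\in\mathbb{B}(\mathbb{X},\mathbb{Y})$, $T\perp_B^{\epsilon}A$ if and only if (a) or (b) holds: (a) there exists a sequence $(x_n)$ of unit vectors in $\mathbb{X}$ such that $\|Tx_n\|\to\|T\|$, and $\lim_{n\to\infty}\|Ax_n\|$ exists and is $\le\epsilon\|A\|$; (b) there exist sequences $(x_n),(y_n)$ of unit vectors in $\mathbb{X}$ and sequences $(\epsilon_n),(\delta_n)$ of positive reals such that: (i) $\epsilon_n\to0$, $\delta_n\to0$, $\|Tx_n\|\to\|T\|$, $\|Ty_n\|\to\|T\|$; (ii) for all $n$ and all $\lambda\ge0$, $\|Tx_n+\lambda Ax_n\|^2\ge(1-\epsilon_n^2)\|Tx_n\|^2-2\epsilon\sqrt{1-\epsilon_n^2}\,\|Tx_n\|\|\lambda A\|$; (iii) for all $n$ and all $\lambda\le0$, $\|Ty_n+\lambda Ay_n\|^2\ge(1-\delta_n^2)\|Ty_n\|^2-2\epsilon\sqrt{1-\delta_n^2}\,\|Ty_n\|\|\lambda A\|$.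
   Context: $\mathbb{B}(\mathbb{X},\mathbb{Y})$ is the space of bounded linear operators from $\mathbb{X}$ to $\mathbb{Y}$ with the operator norm. For $\epsilon\in[0,1)$ and $u,v$ in a normed space, $u\perp_B^{\epsilon}v$ means $\|u+\lambda v\|^2\ge\|u\|^2-2\epsilon\|u\|\|\lambda v\|$ for all $\lambda\in\mathbb{R}$. *)

From Stdlib Require Import Reals Lra ClassicalEpsilon.
Open Scope R_scope.

Record NormedSpace : Type := {
  carrier :> Type;
  zero : carrier;
  add : carrier -> carrier -> carrier;
  opp : carrier -> carrier;
  scal : R -> carrier -> carrier;
  norm : carrier -> R;
  add_assoc : forall x y z, add x (add y z) = add (add x y) z;
  add_comm : forall x y, add x y = add y x;
  add_zero : forall x, add x zero = x;
  add_opp : forall x, add x (opp x) = zero;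
  scal_assoc : forall a b x, scal a (scal b x) = scal (a * b) x;
  scal_one : forall x, scal 1 x = x;
  scal_distr_l : forall a x y, scal a (add x y) = add (scal a x) (scal a y);
  scal_distr_r : forall a b x, scal (a + b) x = add (scal a x) (scal b x);
  norm_eq_zero : forall x, norm x = 0 -> x = zero;
  norm_scal : forall a x, norm (scal a x) = Rabs a * norm x;
  norm_triangle : forall x y, norm (add x y) <= norm x + norm y
}.

Arguments zero {n}.
Arguments add {n}.
Arguments opp {n}.
Arguments scal {n}.
Arguments norm {n}.

Definition is_bounded_linear {X Y : NormedSpace} (T : X -> Y) : Prop :=
  (forall x y, T (add x y) = add (T x) (T y)) /\
  (forall (a : R) x, T (scal a x) = scal a (T x)) /\
  (exists M : R, forall x, norm (T x) <= M * norm x).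

(* Operator norm: ||T|| = sup { ||T x|| : ||x|| <= 1 } (chosen by epsilon;
   for a bounded linear T this supremum exists). *)
Definition opnorm_set {X Y : NormedSpace} (T : X -> Y) (r : R) : Prop :=
  exists x : X, norm x <= 1 /\ r = norm (T x).

Definition opnorm {X Y : NormedSpace} (T : X -> Y) : R :=
  epsilon (inhabits 0) (fun c => is_lub (opnorm_set T) c).

Definition op_add {X Y : NormedSpace} (T A : X -> Y) : X -> Y :=
  fun x => add (T x) (A x).
Definition op_scal {X Y : NormedSpace} (l : R) (A : X -> Y) : X -> Y :=
  fun x => scal l (A x).

Definition bj_eps_orth {V : Type} (nrm : V -> R) (ad : V -> V -> V)
  (sc : R -> V -> V) (eps : R) (u v : V) : Prop :=
  forall l : R,
    (nrm (ad u (sc l v))) ^ 2 >= (nrm u) ^ 2 - 2 * eps * nrm u * nrm (sc l v).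

Definition op_bj_eps_orth {X Y : NormedSpace} (eps : R) (T A : X -> Y) : Prop :=
  bj_eps_orth opnorm op_add op_scal eps T A.

(* If some norming sequence of [T] is almost annihilated by [A], (a) holds.  Otherwise
   [|A x| > k] for all unit [x] with [|T x|] close to [|T|].  Applying the orthogonality to
   [T + h A] for a small step [h > 0] and picking a unit [x] almost attaining its norm gives
   [|T x + h A x| >= |T| - eps h |A| - O(h^2)].  The identity
   [l (T x + h A x) = h (T x + l A x) + (l - h) T x] propagates this to
   [|T x + l A x| >= |T x| - eps l |A| - O(h)] for all [l >= 0] (for large [l] the term
   [l A x] dominates), and squaring yields (ii) with [e_n^2] of order [h_n].  Condition
   (iii) is (ii) for [-A].  Conversely, (a) and (b) give the orthogonality inequality in
   the limit. *)
From Stdlib Require Import Reals Lra Psatz ClassicalEpsilon Classical FunctionalExtensionality.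
Open Scope R_scope.

Section NormedSpaceFacts.
Variable V : NormedSpace.
Implicit Types x y : V.

Lemma add_eq_l x y : add x y = x -> y = zero.
Proof.
  intros H. rewrite <- (add_zero V y), <- (add_opp V x), add_assoc, (add_comm V y x), H.
  reflexivity.
Qed.

Lemma scal_0l x : scal 0 x = zero.
Proof.
  apply (add_eq_l (scal 0 x)). rewrite <- scal_distr_r, Rplus_0_r. reflexivity.
Qed.

Lemma add_scal_N1 x : add x (scal (-1) x) = zero.
Proof.
  rewrite <- (scal_one V x) at 1. rewrite <- scal_distr_r, Rplus_opp_r. apply scal_0l.
Qed.

Lemma norm_0 : norm (@zero V) = 0.
Proof. rewrite <- (scal_0l zero), norm_scal, Rabs_R0. ring. Qed.

Lemma norm_scal_N1 x : norm (scal (-1) x) = norm x.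
Proof. rewrite norm_scal, Rabs_left by lra. ring. Qed.

Lemma norm_ge0 x : 0 <= norm x.
Proof.
  pose proof (norm_triangle V x (scal (-1) x)) as H.
  rewrite add_scal_N1, norm_0, norm_scal_N1 in H. lra.
Qed.

Lemma norm_scal_nonneg a x : 0 <= a -> norm (scal a x) = a * norm x.
Proof. intros Ha. rewrite norm_scal, Rabs_pos_eq by exact Ha. reflexivity. Qed.

Lemma norm_add_ge_r x y : norm y - norm x <= norm (add x y).
Proof.
  pose proof (norm_triangle V (add x y) (scal (-1) x)) as H.
  rewrite (add_comm V x y) in H |- *.
  rewrite <- add_assoc, add_scal_N1, add_zero, norm_scal_N1 in H.
  lra.
Qed.

Lemma norm_add_ge_l x y : norm x - norm y <= norm (add x y).
Proof. rewrite add_comm. apply norm_add_ge_r. Qed.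

Lemma scal_add_scal_swap (u v : V) h l :
  scal l (add u (scal h v)) = add (scal h (add u (scal l v))) (scal (l - h) u).
Proof.
  rewrite !scal_distr_l, !scal_assoc.
  rewrite <- (add_assoc V (scal h u)), (add_comm V (scal (h * l) v)), add_assoc,
    <- scal_distr_r, Rmult_comm.
  f_equal; f_equal; ring.
Qed.

End NormedSpaceFacts.

Section OperatorNorm.
Variables X Y : NormedSpace.
Implicit Types S : X -> Y.

Lemma linear_0 S : is_bounded_linear S -> S zero = zero.
Proof.
  intros [_ [hom _]]. rewrite <- (scal_0l _ zero), hom, scal_0l. reflexivity.
Qed.

Lemma op_scal_bounded_linear l S : is_bounded_linear S -> is_bounded_linear (op_scal l S).
Proof.
  intros [add_S [hom_S [M HM]]]. unfold op_scal. split; [|split].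
  - intros x y. rewrite add_S, scal_distr_l. reflexivity.
  - intros a x. rewrite hom_S, !scal_assoc, Rmult_comm. reflexivity.
  - exists (Rabs l * M). intros x. rewrite norm_scal, Rmult_assoc.
    apply Rmult_le_compat_l; [apply Rabs_pos | apply HM].
Qed.

Lemma op_add_bounded_linear S R :
  is_bounded_linear S -> is_bounded_linear R -> is_bounded_linear (op_add S R).
Proof.
  intros [add_S [hom_S [M HM]]] [add_R [hom_R [N HN]]]. unfold op_add. split; [|split].
  - intros x y. rewrite add_S, add_R, !add_assoc. f_equal.
    rewrite <- !add_assoc, (add_comm _ (S y)). reflexivity.
  - intros a x. rewrite hom_S, hom_R, scal_distr_l. reflexivity.
  - exists (M + N). intros x. eapply Rle_trans; [apply norm_triangle|].
    pose proof (HM x). pose proof (HN x). lra.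
Qed.

Lemma op_scal_op_scal l m S : op_scal l (op_scal m S) = op_scal (l * m) S.
Proof.
  apply functional_extensionality. intros x. unfold op_scal. apply scal_assoc.
Qed.

Lemma exists_unit_image_pos S : is_bounded_linear S -> S <> (fun _ => zero) ->
  exists u, norm u = 1 /\ 0 < norm (S u).
Proof.
  intros hS hS0. apply NNPP. intros Hn. apply hS0, functional_extensionality. intros x.
  destruct (Req_dec (norm x) 0) as [H0|H0].
  { apply norm_eq_zero in H0. subst x. apply linear_0, hS. }
  apply norm_eq_zero. apply Rle_antisym; [|apply norm_ge0]. apply Rnot_lt_le. intros Hx.
  pose proof (norm_ge0 _ x) as Hx0.
  assert (Hinv : 0 < / norm x) by (apply Rinv_0_lt_compat; lra).
  apply Hn. exists (scal (/ norm x) x). destruct hS as [_ [hom _]].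
  rewrite hom, !norm_scal_nonneg by lra. split.
  - field. lra.
  - apply Rmult_lt_0_compat; assumption.
Qed.

Lemma is_lub_opnorm S : is_bounded_linear S -> is_lub (opnorm_set S) (opnorm S).
Proof.
  intros [_ [_ [M HM]]]. unfold opnorm. apply epsilon_spec, upper_bound_thm.
  - exists (Rmax M 0). intros r [x [Hx ->]]. eapply Rle_trans; [apply HM|].
    pose proof (norm_ge0 _ x). pose proof (Rmax_l M 0). pose proof (Rmax_r M 0).
    apply Rle_trans with (Rmax M 0 * norm x); [apply Rmult_le_compat_r; lra|]. nra.
  - exists (norm (S zero)), zero. rewrite norm_0. split; [lra | reflexivity].
Qed.

Section BoundedOperator.
Variable S : X -> Y.
Hypothesis hS : is_bounded_linear S.

Lemma norm_le_opnorm x : norm x <= 1 -> norm (S x) <= opnorm S.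
Proof. intros Hx. apply (is_lub_opnorm S hS). exists x. split; [exact Hx | reflexivity]. Qed.

Lemma sq_norm_le_sq_opnorm x : norm x <= 1 -> norm (S x) ^ 2 <= opnorm S ^ 2.
Proof. intros Hx. apply pow_incr. split; [apply norm_ge0 | apply norm_le_opnorm, Hx]. Qed.

Lemma opnorm_ge0 : 0 <= opnorm S.
Proof.
  pose proof (norm_le_opnorm zero) as H. rewrite norm_0 in H.
  pose proof (norm_ge0 _ (S zero)). lra.
Qed.

Lemma opnorm_approx (d : R) : 0 < d -> 0 < opnorm S ->
  exists x, norm x = 1 /\ opnorm S - d < norm (S x).
Proof.
  intros Hd Ht. set (d' := Rmin d (opnorm S)).
  assert (Hd' : 0 < d') by (apply Rmin_pos; assumption).
  assert (Hnear : exists x, norm x <= 1 /\ opnorm S - d' < norm (S x)).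
  { apply NNPP. intros Hn.
    assert (opnorm S <= opnorm S - d'); [|lra].
    apply (is_lub_opnorm S hS). intros r [x [Hx ->]]. apply Rnot_lt_le. intros Hc.
    apply Hn. exists x. split; assumption. }
  destruct Hnear as [x [Hx HSx]].
  assert (Hx0 : 0 < norm x).
  { destruct (Req_dec (norm x) 0) as [H0|H0]; [|pose proof (norm_ge0 _ x); lra].
    apply norm_eq_zero in H0. subst x. rewrite linear_0, norm_0 in HSx by exact hS.
    pose proof (Rmin_r d (opnorm S)) as Hd'S. fold d' in Hd'S. lra. }
  destruct hS as [_ [hom _]].
  exists (scal (/ norm x) x).
  assert (Hinv : 1 <= / norm x) by (rewrite <- Rinv_1; apply Rinv_le_contravar; lra).
  rewrite hom, !norm_scal_nonneg by lra. split; [field; lra|].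
  pose proof (Rmin_l d (opnorm S)) as Hd'd. fold d' in Hd'd.
  pose proof (norm_ge0 _ (S x)). nra.
Qed.

Lemma opnorm_op_scal l : opnorm (op_scal l S) = Rabs l * opnorm S.
Proof.
  apply (is_lub_u (opnorm_set (op_scal l S))); [apply is_lub_opnorm, op_scal_bounded_linear, hS|].
  destruct (is_lub_opnorm S hS) as [Hub Hleast]. unfold op_scal. split.
  - intros r [x [Hx ->]]. rewrite norm_scal.
    apply Rmult_le_compat_l; [apply Rabs_pos | apply norm_le_opnorm, Hx].
  - intros b Hb. destruct (Req_dec l 0) as [->|Hl].
    + rewrite Rabs_R0, Rmult_0_l. apply Hb. exists zero.
      rewrite norm_0, scal_0l, norm_0. split; [lra | reflexivity].
    + pose proof (Rabs_pos_lt l Hl).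
      assert (Hb' : opnorm S <= b / Rabs l).
      { apply Hleast. intros r [x [Hx ->]].
        assert (Rabs l * norm (S x) <= b).
        { apply Hb. exists x. rewrite norm_scal. split; [exact Hx | reflexivity]. }
        apply (Rmult_le_reg_l (Rabs l)); [assumption|]. field_simplify; lra. }
      apply (Rmult_le_compat_l (Rabs l)) in Hb'; [|lra].
      replace (Rabs l * (b / Rabs l)) with b in Hb' by (field; lra). exact Hb'.
Qed.

End BoundedOperator.
End OperatorNorm.

Definition inv_succ (n : nat) : R := / (INR n + 1).

Lemma inv_succ_gt0 n : 0 < inv_succ n.
Proof. unfold inv_succ. apply Rinv_0_lt_compat. pose proof (pos_INR n). lra. Qed.

Lemma inv_succ_le1 n : inv_succ n <= 1.
Proof.
  unfold inv_succ. rewrite <- Rinv_1. apply Rinv_le_contravar; [lra|].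
  pose proof (pos_INR n). lra.
Qed.

Lemma Un_cv_of_dist_le_inv_succ (u : nat -> R) l C :
  (forall n, Rabs (u n - l) <= C * inv_succ n) -> Un_cv u l.
Proof.
  intros Hb e He.
  assert (HC : 0 < Rabs C + 1) by (pose proof (Rabs_pos C); lra).
  destruct (archimed_cor1 (e / (Rabs C + 1))) as [N [HN1 HN2]].
  { apply Rdiv_lt_0_compat; lra. }
  exists N. intros n Hn. unfold Rdist. eapply Rle_lt_trans; [apply Hb|].
  assert (HNpos : 0 < INR N) by (apply lt_0_INR; assumption).
  assert (Hq : inv_succ n <= / INR N).
  { unfold inv_succ. apply Rinv_le_contravar; [assumption|]. apply le_INR in Hn. lra. }
  pose proof (inv_succ_gt0 n). pose proof (Rle_abs C).
  apply Rle_lt_trans with ((Rabs C + 1) * inv_succ n); [apply Rmult_le_compat_r; lra|].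
  replace e with ((Rabs C + 1) * (e / (Rabs C + 1))) by (field; lra).
  apply Rmult_lt_compat_l; lra.
Qed.

Lemma Un_cv_const c : Un_cv (fun _ => c) c.
Proof. intros e He. exists 0%nat. intros. unfold Rdist. rewrite Rminus_diag, Rabs_R0. exact He. Qed.

Lemma sq_ge_of_ge t m N : 0 <= t -> 0 <= m -> 0 <= N -> t - m <= N -> t^2 - 2*t*m <= N^2.
Proof.
  intros Ht Hm HN H. destruct (Rle_dec 0 (t - m)).
  - assert ((t - m)^2 <= N^2) by (apply pow_incr; lra). nra.
  - nra.
Qed.

(* Since [sqrt (t^2 - 2 t u) >= t - u - u^2/t], the error [K h^2] absorbs the
   quadratic term once [u <= h a] and [2 a^2 <= K t]. *)
Lemma ge_of_sq_ge_approx t N u h a K : 0 < t -> 0 <= N -> t^2 - 2*t*u <= N^2 ->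
  0 <= u <= h*a -> 0 <= a -> 0 < h -> 2*a^2 <= K*t -> 2*K*h^2 <= t -> 0 <= K ->
  t - u - K*h^2 <= N.
Proof.
  intros Ht HN HN2 [Hu0 Hu1] Ha Hh HK1 HK2 HK.
  destruct (Rle_dec (t - u - K*h^2) 0) as [Hc|Hc]; [lra|].
  apply Rsqr_incr_0_var; [unfold Rsqr | assumption].
  assert (u^2 <= (h*a)^2) by nra.
  assert ((u + K*h^2)^2 <= 2*u^2 + 2*(K*h^2)^2) by (pose proof (pow2_ge_0 (u - K*h^2)); nra).
  assert (2*(h*a)^2 <= K*t*h^2) by nra.
  assert (2*(K*h^2)^2 <= K*h^2*t) by (assert (0 <= K*h^2) by nra; nra).
  nra.
Qed.

(* Uses [sqrt (1 - e2) <= 1 - e2/2]: the slack [e2 g0^2 / 2 >= e2 t^2 / 8] pays for [eta]. *)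
Lemma sq_ge_of_ge_approx g g0 t lam eps a eta e2 :
  0 <= g -> g0 - lam*eps*a - eta <= g -> t/2 <= g0 -> 0 < t ->
  8*eta <= e2*t -> 0 <= e2 < 1 -> 0 <= lam -> 0 <= eps -> 0 <= a -> 0 <= eta ->
  g^2 >= (1 - e2) * g0^2 - 2*eps*sqrt (1 - e2) * g0 * (lam * a).
Proof.
  intros Hg Hgg Hg0t Ht He8 [He0 He1] Hl Hep Ha Het. set (s := sqrt (1 - e2)).
  assert (Hs2 : s*s = 1 - e2) by (apply sqrt_sqrt; lra).
  assert (Hs0 : 0 <= s) by apply sqrt_pos.
  assert (Hs1 : s <= 1 - e2/2) by (apply Rsqr_incr_0_var; unfold Rsqr; nra).
  rewrite <- Hs2.
  assert (Hm : 0 <= lam*eps*a) by (apply Rmult_le_pos; [apply Rmult_le_pos|]; lra).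
  destruct (Rle_dec (g0 - lam*eps*a) (g0/2)) as [Hw|Hw].
  - assert (s*g0*(s*g0 - 2*eps*lam*a) <= 0).
    { assert (s*g0 <= g0) by nra. assert (0 <= s*g0) by nra.
      assert (s*g0 - 2*eps*lam*a <= 0) by lra. nra. }
    nra.
  - set (w := g0 - lam*eps*a) in *.
    assert (eta <= (1 - s) * w) by nra.
    assert ((s*w)^2 <= g^2) by (apply pow_incr; split; nra).
    assert (s*s*g0^2 - 2*eps*s*g0*(lam*a) <= (s*w)^2).
    { unfold w. assert (0 <= eps*s*g0*(lam*a)) by (repeat apply Rmult_le_pos; nra).
      assert (s*s <= s) by nra. nra. }
    lra.
Qed.

Section PerturbedNorm.
Variable Y : NormedSpace.
Variables (u v : Y) (t a eps h K L : R).
Hypotheses (ht : 0 < t) (ha : 0 <= a) (heps : 0 <= eps <= 1) (hh : 0 < h) (hK : 0 <= K)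
  (hL : 0 < L).
Hypotheses (hu : norm u <= t) (hv : norm v <= a) (hvL : 2 * t <= L * norm v)
  (huv : t - eps*h*a - 2*K*h^2 <= norm (add u (scal h v))).

Lemma norm_add_scal_ge lam : 0 <= lam ->
  norm u - lam*eps*a - h * (a + 2*K*L) <= norm (add u (scal lam v)).
Proof.
  intros Hl. pose proof (norm_ge0 _ u). pose proof (norm_ge0 _ v).
  set (g := norm (add u (scal lam v))).
  destruct (Rle_dec lam h) as [C1|C1].
  { pose proof (norm_add_ge_l _ u (scal lam v)) as Hg.
    rewrite norm_scal_nonneg in Hg by lra. fold g in Hg.
    assert (lam * norm v <= lam * a) by (apply Rmult_le_compat_l; lra).
    assert (0 <= lam*eps*a) by (apply Rmult_le_pos; [apply Rmult_le_pos|]; lra).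
    assert (lam*a <= h*a) by nra.
    assert (0 <= h*(K*L)) by (apply Rmult_le_pos; [lra | apply Rmult_le_pos; lra]).
    nra. }
  destruct (Rle_dec L lam) as [C2|C2].
  { pose proof (norm_add_ge_r _ u (scal lam v)) as Hg.
    rewrite norm_scal_nonneg in Hg by lra. fold g in Hg.
    assert (L * norm v <= lam * norm v) by (apply Rmult_le_compat_r; lra).
    assert (0 <= lam*eps*a) by (apply Rmult_le_pos; [apply Rmult_le_pos|]; lra).
    assert (0 <= h*(a + 2*K*L)) by (apply Rmult_le_pos; nra).
    lra. }
  pose proof (f_equal norm (scal_add_scal_swap _ u v h lam)) as Hid.
  pose proof (norm_triangle _ (scal h (add u (scal lam v))) (scal (lam - h) u)) as Htri.
  rewrite <- Hid, !norm_scal_nonneg in Htri by lra. fold g in Htri.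
  set (G := norm (add u (scal h v))) in *.
  assert (lam * (t - eps*h*a - 2*K*h^2) <= lam * G) by (apply Rmult_le_compat_l; lra).
  assert (Hf : h * (norm u - lam*eps*a - h * (a + 2*K*L)) <= h * g);
    [|apply Rmult_le_reg_l in Hf; lra].
  assert (lam * (t - norm u) >= 0) by nra.
  assert (2*K*h*lam <= 2*K*h*L) by (apply Rmult_le_compat_l; nra).
  nra.
Qed.

Lemma norm_add_scal_sq_ge e2 : t / 2 <= norm u -> e2 * t = 8 * h * (a + 2*K*L) -> e2 < 1 ->
  forall lam, 0 <= lam ->
  norm (add u (scal lam v)) ^ 2 >=
    (1 - e2) * norm u ^ 2 - 2*eps*sqrt (1 - e2) * norm u * (lam * a).
Proof.
  intros Hu2 He2 He1 lam Hl.
  assert (0 <= h * (a + 2*K*L)) by (apply Rmult_le_pos; nra).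
  apply (sq_ge_of_ge_approx _ _ t lam eps a (h * (a + 2*K*L)));
    [apply norm_ge0 | apply norm_add_scal_ge; assumption | assumption | assumption
    | lra | split; [nra | assumption] | assumption | lra | assumption | assumption].
Qed.

End PerturbedNorm.

Section OneSidedSequence.
Variables X Y : NormedSpace.
Variables (T B : X -> Y) (eps k : R).
Hypotheses (heps : 0 <= eps <= 1) (hT : is_bounded_linear T) (hB : is_bounded_linear B).
Hypotheses (ht : 0 < opnorm T) (hk : 0 < k) (hkt : k <= opnorm T / 2).
Hypothesis horth : forall l, 0 <= l ->
  opnorm (op_add T (op_scal l B)) ^ 2 >=
  opnorm T ^ 2 - 2 * eps * opnorm T * opnorm (op_scal l B).
Hypothesis hkap : forall x, norm x = 1 -> opnorm T - k <= norm (T x) -> k < norm (B x).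

Local Notation t := (opnorm T).
Local Notation b := (opnorm B).

Lemma good_unit_vector K h e2 :
  2 * b^2 <= K * t -> 1 <= K -> 0 < h -> h <= 1 -> (2*b + 2*K) * h <= k ->
  e2 * t = 8 * h * (b + 2*K*(2*t/k)) -> e2 < 1 ->
  exists x, norm x = 1 /\ t - (2*b + 2*K) * h <= norm (T x) /\
    forall l, 0 <= l ->
    norm (add (T x) (scal l (B x))) ^ 2 >=
      (1 - e2) * norm (T x) ^ 2 - 2 * eps * sqrt (1 - e2) * norm (T x) * opnorm (op_scal l B).
Proof.
  intros HK HK1 Hh Hh1 Hhk He2 He1.
  pose proof (opnorm_ge0 _ _ B hB) as Hb.
  assert (HKh : 2*K*h^2 <= t) by nra.
  set (S := op_add T (op_scal h B)).
  assert (hS : is_bounded_linear S)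
    by (apply op_add_bounded_linear; [|apply op_scal_bounded_linear]; assumption).
  assert (HN : t - eps*h*b - K*h^2 <= opnorm S).
  { pose proof (horth h (Rlt_le _ _ Hh)) as Hh'.
    rewrite (opnorm_op_scal _ _ B hB), Rabs_pos_eq in Hh' by lra.
    apply (ge_of_sq_ge_approx _ _ _ h b); try assumption; try lra.
    - apply opnorm_ge0, hS.
    - fold S in Hh'. nra.
    - assert (0 <= h*b) by nra. split; nra. }
  assert (0 <= h*b) by nra. assert (0 <= K*h) by nra.
  assert (Heps_hb : eps*h*b <= h*b) by nra.
  assert (HKh2 : K*h^2 <= K*h) by (apply Rmult_le_compat_l; nra).
  destruct (opnorm_approx _ _ S hS (K*h^2)) as [x [Hx HSx]]; [nra | lra |].
  change (S x) with (add (T x) (scal h (B x))) in HSx.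
  pose proof (norm_le_opnorm _ _ T hT x (Req_le _ _ Hx)) as HTx.
  pose proof (norm_le_opnorm _ _ B hB x (Req_le _ _ Hx)) as HBx.
  pose proof (norm_triangle _ (T x) (scal h (B x))) as Htri.
  rewrite norm_scal_nonneg in Htri by lra.
  assert (h * norm (B x) <= h * b) by (apply Rmult_le_compat_l; lra).
  assert (HTlow : t - (2*b + 2*K) * h <= norm (T x)) by lra.
  assert (HBk : k < norm (B x)) by (apply hkap; [assumption | lra]).
  exists x. split; [assumption|]. split; [assumption|].
  intros l Hl. rewrite (opnorm_op_scal _ _ B hB), Rabs_pos_eq by exact Hl.
  assert (HL : 2 * t / k * k = 2 * t) by (field; lra).
  apply (norm_add_scal_sq_ge _ (T x) (B x) t b eps h K (2*t/k)); try assumption; try lra.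
  - unfold Rdiv. apply Rmult_lt_0_compat; [lra | apply Rinv_0_lt_compat; lra].
  - assert (2 * t / k * k <= 2 * t / k * norm (B x)); [|lra].
    apply Rmult_le_compat_l; [|lra]. unfold Rdiv.
    apply Rmult_le_pos; [lra | left; apply Rinv_0_lt_compat; lra].
Qed.

Lemma one_sided_sequence_of_steps c D H : 0 < c -> 0 < H -> 0 <= D ->
  (forall n, exists x, norm x = 1 /\ t - D * (H * inv_succ n ^ 2) <= norm (T x) /\
    forall l, 0 <= l ->
    norm (add (T x) (scal l (B x))) ^ 2 >=
      (1 - c * (H * inv_succ n ^ 2)) * norm (T x) ^ 2
      - 2 * eps * sqrt (1 - c * (H * inv_succ n ^ 2)) * norm (T x) * opnorm (op_scal l B)) ->
  exists (x : nat -> X) (en : nat -> R),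
  (forall n, norm (x n) = 1) /\ (forall n, 0 < en n) /\ Un_cv en 0 /\
  Un_cv (fun n => norm (T (x n))) t /\
  (forall n l, 0 <= l ->
     norm (add (T (x n)) (scal l (B (x n)))) ^ 2 >=
     (1 - en n ^ 2) * norm (T (x n)) ^ 2
     - 2 * eps * sqrt (1 - en n ^ 2) * norm (T (x n)) * opnorm (op_scal l B)).
Proof.
  intros Hc HH HD Hgood. destruct (choice _ Hgood) as [x Hx].
  set (en := fun n => sqrt (c * H) * inv_succ n).
  assert (Hen : forall n, en n ^ 2 = c * (H * inv_succ n ^ 2)).
  { intros n. unfold en. rewrite Rpow_mult_distr, pow2_sqrt by nra. ring. }
  exists x, en. repeat split.
  - intros n. apply (Hx n).
  - intros n. apply Rmult_lt_0_compat; [apply sqrt_lt_R0; nra | apply inv_succ_gt0].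
  - apply (Un_cv_of_dist_le_inv_succ _ _ (sqrt (c * H))). intros n.
    rewrite Rminus_0_r, Rabs_pos_eq; [apply Rle_refl|].
    apply Rmult_le_pos; [apply sqrt_pos | left; apply inv_succ_gt0].
  - apply (Un_cv_of_dist_le_inv_succ _ _ (D * H)). intros n.
    destruct (Hx n) as [Hxn [HTx _]].
    pose proof (norm_le_opnorm _ _ T hT (x n) (Req_le _ _ Hxn)).
    pose proof (inv_succ_gt0 n). pose proof (inv_succ_le1 n).
    assert (H * inv_succ n ^ 2 <= H * inv_succ n) by (apply Rmult_le_compat_l; nra).
    assert (D * (H * inv_succ n ^ 2) <= D * H * inv_succ n)
      by (rewrite Rmult_assoc; apply Rmult_le_compat_l; lra).
    rewrite Rabs_left1; lra.
  - intros n l Hl. rewrite Hen. apply (Hx n), Hl.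
Qed.

Lemma one_sided_sequence : exists (x : nat -> X) (en : nat -> R),
  (forall n, norm (x n) = 1) /\ (forall n, 0 < en n) /\ Un_cv en 0 /\
  Un_cv (fun n => norm (T (x n))) t /\
  (forall n l, 0 <= l ->
     norm (add (T (x n)) (scal l (B (x n)))) ^ 2 >=
     (1 - en n ^ 2) * norm (T (x n)) ^ 2
     - 2 * eps * sqrt (1 - en n ^ 2) * norm (T (x n)) * opnorm (op_scal l B)).
Proof.
  pose proof (opnorm_ge0 _ _ B hB) as Hb.
  set (K := 2 * b^2 / t + 1).
  assert (HK : 2 * b^2 <= K * t) by (unfold K; field_simplify; [|lra]; unfold Rdiv; nra).
  assert (HK1 : 1 <= K).
  { unfold K. assert (0 <= 2 * b^2 / t); [|lra].
    unfold Rdiv. apply Rmult_le_pos; [nra | left; apply Rinv_0_lt_compat; lra]. }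
  set (L := 2 * t / k).
  assert (HKL : 0 < K * L) by (apply Rmult_lt_0_compat; [lra | unfold L; apply Rdiv_lt_0_compat; lra]).
  set (c := 8 * (b + 2*K*L) / t).
  set (M := 2*b + 2*K + 8 * (b + 2*K*L) + 1).
  assert (HM : 0 < M) by (unfold M; lra).
  set (H := Rmin 1 (k / M)).
  assert (HH : 0 < H) by (apply Rmin_pos; [lra | apply Rdiv_lt_0_compat; lra]).
  assert (HHM : M * H <= k).
  { pose proof (Rmin_r 1 (k / M)) as HkM. fold H in HkM.
    apply (Rmult_le_compat_l M) in HkM; [|lra].
    replace (M * (k / M)) with k in HkM by (field; lra). exact HkM. }
  apply (one_sided_sequence_of_steps c (2*b + 2*K) H);
    [unfold c; apply Rdiv_lt_0_compat; lra | assumption | lra |].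
  intros n. set (h := H * inv_succ n ^ 2).
  assert (Hh : 0 < h /\ h <= 1 /\ M * h <= k).
  { pose proof (inv_succ_gt0 n). pose proof (inv_succ_le1 n).
    pose proof (Rmin_l 1 (k / M)) as HH1. fold H in HH1.
    assert (h <= H) by (unfold h; rewrite <- (Rmult_1_r H) at 2; apply Rmult_le_compat_l; nra).
    assert (M * h <= M * H) by (apply Rmult_le_compat_l; lra).
    unfold h in *. repeat split; try lra. apply Rmult_lt_0_compat; [lra | apply pow_lt; lra]. }
  destruct Hh as [Hh0 [Hh1 HhM]]. unfold M in HhM.
  assert (c * h * t = 8 * h * (b + 2*K*L)) by (unfold c; field; lra).
  apply good_unit_vector; try assumption; try nra.
Qed.

End OneSidedSequence.

Lemma sq_ge_of_approx_lower_bounds (g e : nat -> R) t eps m N :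
  Un_cv g t -> Un_cv e 0 -> 0 <= eps -> 0 <= m -> (forall n, 0 <= g n) ->
  (forall n, N^2 >= (1 - e n ^ 2) * g n ^ 2 - 2 * eps * sqrt (1 - e n ^ 2) * g n * m) ->
  t^2 - 2*eps*t*m <= N^2.
Proof.
  intros Hg He Heps Hm Hg0 HN.
  replace (t^2 - 2*eps*t*m) with ((1 - 0*0) * (t*t) - (2*eps*m)*t) by ring.
  apply (Rle_cv_lim (Un := fun n => (1 - e n * e n) * (g n * g n) - (2*eps*m) * g n)
                    (Vn := fun _ => N^2));
    [| repeat first [apply CV_minus | apply CV_mult | apply Un_cv_const | assumption]
     | apply Un_cv_const].
  intros n. specialize (HN n).
  assert (Hs : sqrt (1 - e n ^ 2) <= 1).
  { rewrite <- sqrt_1 at 2. apply sqrt_le_1_alt. pose proof (pow2_ge_0 (e n)). lra. }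
  assert (0 <= eps * m * g n) by (apply Rmult_le_pos; [apply Rmult_le_pos|]; auto).
  assert (eps * sqrt (1 - e n ^ 2) * g n * m <= eps * m * g n).
  { replace (eps * sqrt (1 - e n ^ 2) * g n * m) with (sqrt (1 - e n ^ 2) * (eps * m * g n)) by ring.
    pose proof (sqrt_pos (1 - e n ^ 2)). nra. }
  nra.
Qed.

Section Characterisation.
Variables X Y : NormedSpace.
Variables (eps : R) (T A : X -> Y).
Hypotheses (heps : 0 <= eps < 1) (hT : is_bounded_linear T) (hA : is_bounded_linear A).

Definition cond_a : Prop :=
  exists x : nat -> X,
    (forall n, norm (x n) = 1) /\
    Un_cv (fun n => norm (T (x n))) (opnorm T) /\
    (exists l : R, Un_cv (fun n => norm (A (x n))) l /\ l <= eps * opnorm A).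

Definition cond_b : Prop :=
  exists (x y : nat -> X) (en dn : nat -> R),
    (forall n, norm (x n) = 1) /\ (forall n, norm (y n) = 1) /\
    (forall n, 0 < en n) /\ (forall n, 0 < dn n) /\
    Un_cv en 0 /\ Un_cv dn 0 /\
    Un_cv (fun n => norm (T (x n))) (opnorm T) /\
    Un_cv (fun n => norm (T (y n))) (opnorm T) /\
    (forall n (l : R), 0 <= l ->
       (norm (add (T (x n)) (scal l (A (x n))))) ^ 2 >=
       (1 - (en n) ^ 2) * (norm (T (x n))) ^ 2
       - 2 * eps * sqrt (1 - (en n) ^ 2) * norm (T (x n))
           * opnorm (op_scal l A)) /\
    (forall n (l : R), l <= 0 ->
       (norm (add (T (y n)) (scal l (A (y n))))) ^ 2 >=
       (1 - (dn n) ^ 2) * (norm (T (y n))) ^ 2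
       - 2 * eps * sqrt (1 - (dn n) ^ 2) * norm (T (y n))
           * opnorm (op_scal l A)).

Lemma op_add_scal_bounded_linear l : is_bounded_linear (op_add T (op_scal l A)).
Proof. apply op_add_bounded_linear; [|apply op_scal_bounded_linear]; assumption. Qed.

Lemma orth_of_cond_a : cond_a -> op_bj_eps_orth eps T A.
Proof.
  intros [x [Hx [HTx [l0 [HAx Hl0]]]]] l.
  set (S := op_add T (op_scal l A)).
  assert (HS : opnorm T - Rabs l * l0 <= opnorm S).
  { apply (Rle_cv_lim (Un := fun n => norm (T (x n)) - Rabs l * norm (A (x n)))
                      (Vn := fun _ => opnorm S));
      [| apply CV_minus, CV_mult; [assumption | apply Un_cv_const | assumption]
       | apply Un_cv_const].
    intros n. eapply Rle_trans;
      [| apply (norm_le_opnorm _ _ S (op_add_scal_bounded_linear l)); rewrite Hx; lra].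
    pose proof (norm_add_ge_l _ (T (x n)) (scal l (A (x n)))) as Htri.
    rewrite norm_scal in Htri. exact Htri. }
  assert (Rabs l * l0 <= Rabs l * (eps * opnorm A))
    by (apply Rmult_le_compat_l; [apply Rabs_pos | exact Hl0]).
  rewrite (opnorm_op_scal _ _ A hA). apply Rle_ge.
  replace (2 * eps * opnorm T * (Rabs l * opnorm A))
    with (2 * opnorm T * (eps * (Rabs l * opnorm A))) by ring.
  pose proof (Rabs_pos l). pose proof (opnorm_ge0 _ _ A hA).
  apply sq_ge_of_ge; [apply (opnorm_ge0 _ _ T hT) | apply Rmult_le_pos; nra
    | apply (opnorm_ge0 _ _ S (op_add_scal_bounded_linear l)) | lra].
Qed.

Lemma orth_of_cond_b : cond_b -> op_bj_eps_orth eps T A.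
Proof.
  intros [x [y [en [dn [Hx [Hy [_ [_ [Hen [Hdn [HTx [HTy [Hxl Hyl]]]]]]]]]]]]] l.
  set (S := op_add T (op_scal l A)).
  pose proof (op_add_scal_bounded_linear l) as hS.
  apply Rle_ge. destruct (Rle_dec 0 l) as [Hl|Hl].
  - apply (sq_ge_of_approx_lower_bounds (fun n => norm (T (x n))) en); try assumption; try lra.
    + apply opnorm_ge0, op_scal_bounded_linear, hA.
    + intros n. apply norm_ge0.
    + intros n. pose proof (sq_norm_le_sq_opnorm _ _ S hS (x n) ltac:(rewrite Hx; lra)).
      pose proof (Hxl n l Hl). unfold S, op_add, op_scal in *. lra.
  - apply (sq_ge_of_approx_lower_bounds (fun n => norm (T (y n))) dn); try assumption; try lra.
    + apply opnorm_ge0, op_scal_bounded_linear, hA.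
    + intros n. apply norm_ge0.
    + intros n. pose proof (sq_norm_le_sq_opnorm _ _ S hS (y n) ltac:(rewrite Hy; lra)).
      pose proof (Hyl n l ltac:(lra)). unfold S, op_add, op_scal in *. lra.
Qed.

Lemma cond_a_of_norming_null :
  (forall k, 0 < k -> exists x, norm x = 1 /\ opnorm T - k <= norm (T x) /\ norm (A x) <= k) ->
  cond_a.
Proof.
  intros Hall.
  destruct (choice (fun n x => norm x = 1 /\ opnorm T - inv_succ n <= norm (T x) /\
                               norm (A x) <= inv_succ n)
                   (fun n => Hall _ (inv_succ_gt0 n))) as [x Hx].
  exists x. split; [intros n; apply (Hx n)|]. split.
  - apply (Un_cv_of_dist_le_inv_succ _ _ 1). intros n. destruct (Hx n) as [Hxn [HTx _]].
    pose proof (norm_le_opnorm _ _ T hT (x n) (Req_le _ _ Hxn)).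
    rewrite Rabs_left1 by lra. lra.
  - exists 0. split.
    + apply (Un_cv_of_dist_le_inv_succ _ _ 1). intros n. destruct (Hx n) as [_ [_ HAx]].
      rewrite Rminus_0_r, Rabs_pos_eq by apply norm_ge0. lra.
    + apply Rmult_le_pos; [lra | apply (opnorm_ge0 _ _ A hA)].
Qed.

Lemma cond_b_of_orth k0 : 0 < k0 -> 0 < opnorm T ->
  (forall x, norm x = 1 -> opnorm T - k0 <= norm (T x) -> k0 < norm (A x)) ->
  op_bj_eps_orth eps T A -> cond_b.
Proof.
  intros Hk0 Ht Hkap Horth. set (k := Rmin k0 (opnorm T / 2)).
  assert (Hk : 0 < k) by (apply Rmin_pos; lra).
  pose proof (Rmin_l k0 (opnorm T / 2)) as Hkk0. pose proof (Rmin_r k0 (opnorm T / 2)) as Hkt.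
  fold k in Hkk0, Hkt.
  assert (HkapA : forall z, norm z = 1 -> opnorm T - k <= norm (T z) -> k < norm (A z)).
  { intros z Hz HTz. pose proof (Hkap z Hz ltac:(lra)). lra. }
  assert (HkapNA : forall z, norm z = 1 -> opnorm T - k <= norm (T z) ->
                             k < norm (op_scal (-1) A z)).
  { intros z Hz HTz. unfold op_scal. rewrite norm_scal_N1. apply HkapA; assumption. }
  assert (HorthNA : forall l, 0 <= l ->
    opnorm (op_add T (op_scal l (op_scal (-1) A))) ^ 2 >=
    opnorm T ^ 2 - 2 * eps * opnorm T * opnorm (op_scal l (op_scal (-1) A))).
  { intros l _. rewrite op_scal_op_scal. apply Horth. }
  destruct (one_sided_sequence X Y T A eps k ltac:(lra) hT hA Ht Hk Hkt (fun l _ => Horth l) HkapA)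
    as [x [en [Hx [Hen [Hen0 [HTx Hxl]]]]]].
  destruct (one_sided_sequence X Y T (op_scal (-1) A) eps k ltac:(lra) hT
              (op_scal_bounded_linear _ _ _ A hA) Ht Hk Hkt HorthNA HkapNA)
    as [y [dn [Hy [Hdn [Hdn0 [HTy Hyl]]]]]].
  exists x, y, en, dn. repeat split; try assumption.
  intros n l Hl. pose proof (Hyl n (- l) ltac:(lra)) as Hyn.
  rewrite op_scal_op_scal in Hyn. unfold op_scal at 1 in Hyn. rewrite scal_assoc in Hyn.
  replace (- l * -1) with l in Hyn by ring. exact Hyn.
Qed.

Lemma cond_a_or_b_of_orth : T <> (fun _ => zero) -> op_bj_eps_orth eps T A -> cond_a \/ cond_b.
Proof.
  intros hT0 Horth.
  destruct (exists_unit_image_pos _ _ T hT hT0) as [u [Hu HTu]].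
  pose proof (norm_le_opnorm _ _ T hT u (Req_le _ _ Hu)).
  destruct (classic (forall k, 0 < k ->
      exists x, norm x = 1 /\ opnorm T - k <= norm (T x) /\ norm (A x) <= k)) as [Hall|Hnot].
  - left. apply cond_a_of_norming_null, Hall.
  - right. apply not_all_ex_not in Hnot. destruct Hnot as [k0 Hk0].
    apply imply_to_and in Hk0. destruct Hk0 as [Hk0 Hnone].
    apply (cond_b_of_orth k0); try assumption; try lra.
    intros x Hx HTx. apply Rnot_le_lt. intros HAx. apply Hnone. exists x. auto.
Qed.

End Characterisation.

Theorem mainTheorem8 (X Y : NormedSpace) (eps : R) (T : X -> Y)
  (heps : 0 <= eps < 1)
  (hT : is_bounded_linear T) (hT0 : T <> (fun _ => zero))
  (A : X -> Y) (hA : is_bounded_linear A) :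
  op_bj_eps_orth eps T A <->
  ( (* (a) *)
    (exists x : nat -> X,
        (forall n, norm (x n) = 1) /\
        Un_cv (fun n => norm (T (x n))) (opnorm T) /\
        (exists l : R, Un_cv (fun n => norm (A (x n))) l /\ l <= eps * opnorm A))
    \/
    (* (b) *)
    (exists (x y : nat -> X) (en dn : nat -> R),
        (forall n, norm (x n) = 1) /\ (forall n, norm (y n) = 1) /\
        (forall n, 0 < en n) /\ (forall n, 0 < dn n) /\
        Un_cv en 0 /\ Un_cv dn 0 /\
        Un_cv (fun n => norm (T (x n))) (opnorm T) /\
        Un_cv (fun n => norm (T (y n))) (opnorm T) /\
        (forall n (l : R), 0 <= l ->
           (norm (add (T (x n)) (scal l (A (x n))))) ^ 2 >=
           (1 - (en n) ^ 2) * (norm (T (x n))) ^ 2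
           - 2 * eps * sqrt (1 - (en n) ^ 2) * norm (T (x n))
               * opnorm (op_scal l A)) /\
        (forall n (l : R), l <= 0 ->
           (norm (add (T (y n)) (scal l (A (y n))))) ^ 2 >=
           (1 - (dn n) ^ 2) * (norm (T (y n))) ^ 2
           - 2 * eps * sqrt (1 - (dn n) ^ 2) * norm (T (y n))
               * opnorm (op_scal l A)))).
Proof.
  split.
  - apply cond_a_or_b_of_orth; assumption.
  - intros [Ha | Hb]; [apply orth_of_cond_a | apply orth_of_cond_b]; assumption.
Qed.
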